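(* Let $\Omega\subset\mathbb{R}^3$ be a domain, $q\in C(\Omega,\mathbb{C})$, and let $\mathbf Q_1,\mathbf Q_2,\mathbf Q_3,\mathbf Q_4$ be four solutions of the same Riccati equation $D\mathbf Q+|\mathbf Q|^2=q$ in $\Omega$ such that the differences $\mathbf Q_1-\mathbf Q_2$, $\mathbf Q_3-\mathbf Q_4$, $\mathbf Q_1-\mathbf Q_4$, $\mathbf Q_3-\mathbf Q_2$ are invertible in $\mathbb{H}(\mathbb{C})$ at every point. Then $$\frac{D(\mathbf Q_1-\mathbf Q_2)-2(\mathbf Q_1\times\mathbf Q_2)}{\mathbf Q_1-\mathbf Q_2}+\frac{D(\mathbf Q_3-\mathbf Q_4)-2(\mathbf Q_3\times\mathbf Q_4)}{\mathbf Q_3-\mathbf Q_4}-\frac{D(\mathbf Q_1-\mathbf Q_4)-2(\mathbf Q_1\times\mathbf Q_4)}{\mathbf Q_1-\mathbf Q_4}-\frac{D(\mathbf Q_3-\mathbf Q_2)-2(\mathbf Q_3\times\mathbf Q_2)}{\mathbf Q_3-\mathbf Q_2}=\mathbf 0,$$ where $\frac{a}{b}$ denotes $a\,b^{-1}$ (right division).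
   Context: $\mathbb{H}(\mathbb{C})$ denotes the complex quaternions: elements $x=\sum_{\ell=0}^3x_\ell e_\ell$ with $x_\ell\in\mathbb{C}$, $e_0=1$, $e_pe_q=-\delta_{pq}+\varepsilon_{pqr}e_r$ for $p,q,r\in\{1,2,3\}$, and $i$ commuting with all $e_\ell$; the product of vectors is $\mathbf x\mathbf y=-\langle\mathbf x,\mathbf y\rangle+\mathbf x\times\mathbf y$ with $\langle\cdot,\cdot\rangle$, $\times$ the standard bilinear inner and cross products on $\mathbb{C}^3$. An element $x$ is invertible iff $x\overline x=\sum_\ell x_\ell^2\neq0$, where $\overline{x}=x_0-\mathbf x$. For a vector $\mathbf Q$, $|\mathbf Q|^2=-\mathbf Q^2=\sum_jQ_j^2$. The Dirac operator is $D\varphi=\sum_{k=1}^3e_k\partial_k\varphi$. Solutions of the Riccati equation are $\mathbf Q\in C^1(\Omega,\mathrm{Vec}\,\mathbb{H}(\mathbb{C}))$. *)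

From Stdlib Require Import Reals Lra ClassicalEpsilon.
Open Scope R_scope.

Record Cx := mkC { re : R; im : R }.
Definition C0 : Cx := mkC 0 0.
Definition Cr (r : R) : Cx := mkC r 0.
Definition Cadd (a b : Cx) : Cx := mkC (re a + re b) (im a + im b).
Definition Copp (a : Cx) : Cx := mkC (- re a) (- im a).
Definition Csub (a b : Cx) : Cx := Cadd a (Copp b).
Definition Cmul (a b : Cx) : Cx :=
  mkC (re a * re b - im a * im b) (re a * im b + im a * re b).
Definition Cinv (a : Cx) : Cx :=
  mkC (re a / (re a * re a + im a * im a)) (- im a / (re a * re a + im a * im a)).
Definition Cmod (a : Cx) : R := sqrt (re a * re a + im a * im a).

Record HC := mkH { h0 : Cx; h1 : Cx; h2 : Cx; h3 : Cx }.
Definition H0 : HC := mkH C0 C0 C0 C0.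
Definition Hadd (x y : HC) : HC :=
  mkH (Cadd (h0 x) (h0 y)) (Cadd (h1 x) (h1 y)) (Cadd (h2 x) (h2 y)) (Cadd (h3 x) (h3 y)).
Definition Hopp (x : HC) : HC := mkH (Copp (h0 x)) (Copp (h1 x)) (Copp (h2 x)) (Copp (h3 x)).
Definition Hsub (x y : HC) : HC := Hadd x (Hopp y).
Definition Hscal (c : Cx) (x : HC) : HC :=
  mkH (Cmul c (h0 x)) (Cmul c (h1 x)) (Cmul c (h2 x)) (Cmul c (h3 x)).
(* product: e_p e_q = -delta_pq + eps_pqr e_r, i commutes with e_l *)
Definition Hmul (x y : HC) : HC :=
  let a0 := h0 x in let a1 := h1 x in let a2 := h2 x in let a3 := h3 x in
  let b0 := h0 y in let b1 := h1 y in let b2 := h2 y in let b3 := h3 y in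
  mkH (Csub (Csub (Csub (Cmul a0 b0) (Cmul a1 b1)) (Cmul a2 b2)) (Cmul a3 b3))
      (Cadd (Cadd (Cmul a0 b1) (Cmul a1 b0)) (Csub (Cmul a2 b3) (Cmul a3 b2)))
      (Cadd (Cadd (Cmul a0 b2) (Cmul a2 b0)) (Csub (Cmul a3 b1) (Cmul a1 b3)))
      (Cadd (Cadd (Cmul a0 b3) (Cmul a3 b0)) (Csub (Cmul a1 b2) (Cmul a2 b1))).
Definition Hconj (x : HC) : HC := mkH (h0 x) (Copp (h1 x)) (Copp (h2 x)) (Copp (h3 x)).
(* x * conj x = sum_l x_l^2 *)
Definition Hnorm2 (x : HC) : Cx :=
  Cadd (Cadd (Cadd (Cmul (h0 x) (h0 x)) (Cmul (h1 x) (h1 x))) (Cmul (h2 x) (h2 x)))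
       (Cmul (h3 x) (h3 x)).
Definition Hinvertible (x : HC) : Prop := Hnorm2 x <> C0.
Definition Hinv (x : HC) : HC := Hscal (Cinv (Hnorm2 x)) (Hconj x).
Definition Hrdiv (a b : HC) : HC := Hmul a (Hinv b).
Definition Hsc (c : Cx) : HC := mkH c C0 C0 C0.
Definition e1 : HC := mkH C0 (Cr 1) C0 C0.
Definition e2 : HC := mkH C0 C0 (Cr 1) C0.
Definition e3 : HC := mkH C0 C0 C0 (Cr 1).

Record V3 := mkV { v1 : Cx; v2 : Cx; v3 : Cx }.
Definition vec (v : V3) : HC := mkH C0 (v1 v) (v2 v) (v3 v).
Definition Vsub (a b : V3) : V3 := mkV (Csub (v1 a) (v1 b)) (Csub (v2 a) (v2 b)) (Csub (v3 a) (v3 b)).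
Definition Vcross (a b : V3) : V3 :=
  mkV (Csub (Cmul (v2 a) (v3 b)) (Cmul (v3 a) (v2 b)))
      (Csub (Cmul (v3 a) (v1 b)) (Cmul (v1 a) (v3 b)))
      (Csub (Cmul (v1 a) (v2 b)) (Cmul (v2 a) (v1 b))).
(* |Q|^2 = sum_j Q_j^2 (complex, bilinear) *)
Definition Vnorm2 (a : V3) : Cx :=
  Cadd (Cadd (Cmul (v1 a) (v1 a)) (Cmul (v2 a) (v2 a))) (Cmul (v3 a) (v3 a)).

Record P3 := mkP { x1 : R; x2 : R; x3 : R }.
Definition dist3 (x y : P3) : R :=
  sqrt ((x1 x - x1 y)^2 + (x2 x - x2 y)^2 + (x3 x - x3 y)^2).
Definition is_open (U : P3 -> Prop) : Prop :=
  forall x, U x -> exists r, 0 < r /\ forall y, dist3 x y < r -> U y.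
Definition is_connected (O : P3 -> Prop) : Prop :=
  forall U V : P3 -> Prop, is_open U -> is_open V ->
    (forall x, O x -> U x \/ V x) ->
    (forall x, O x -> U x -> V x -> False) ->
    (exists x, O x /\ U x) -> (exists x, O x /\ V x) -> False.
Definition is_domain (O : P3 -> Prop) : Prop :=
  (exists x, O x) /\ is_open O /\ is_connected O.

Definition Rcont_on (O : P3 -> Prop) (f : P3 -> R) : Prop :=
  forall x, O x -> forall eps, 0 < eps -> exists d, 0 < d /\
    forall y, O y -> dist3 x y < d -> Rabs (f y - f x) < eps.
Definition Ccont_on (O : P3 -> Prop) (f : P3 -> Cx) : Prop :=
  forall x, O x -> forall eps, 0 < eps -> exists d, 0 < d /\
    forall y, O y -> dist3 x y < d -> Cmod (Csub (f y) (f x)) < eps.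

Inductive Idx := I1 | I2 | I3.
Definition shift (x : P3) (k : Idx) (t : R) : P3 :=
  match k with
  | I1 => mkP (x1 x + t) (x2 x) (x3 x)
  | I2 => mkP (x1 x) (x2 x + t) (x3 x)
  | I3 => mkP (x1 x) (x2 x) (x3 x + t)
  end.
Definition has_partial (f : P3 -> R) (k : Idx) (x : P3) (l : R) : Prop :=
  derivable_pt_lim (fun t => f (shift x k t)) 0 l.
(* the partial derivative (chosen value when it exists) *)
Definition pd (f : P3 -> R) (k : Idx) (x : P3) : R :=
  epsilon (inhabits 0) (fun l => has_partial f k x l).
Definition Cpd (f : P3 -> Cx) (k : Idx) (x : P3) : Cx :=
  mkC (pd (fun y => re (f y)) k x) (pd (fun y => im (f y)) k x).
Definition Hpd (f : P3 -> HC) (k : Idx) (x : P3) : HC :=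
  mkH (Cpd (fun y => h0 (f y)) k x) (Cpd (fun y => h1 (f y)) k x)
      (Cpd (fun y => h2 (f y)) k x) (Cpd (fun y => h3 (f y)) k x).
Definition Dirac (f : P3 -> HC) (x : P3) : HC :=
  Hadd (Hadd (Hmul e1 (Hpd f I1 x)) (Hmul e2 (Hpd f I2 x))) (Hmul e3 (Hpd f I3 x)).
Definition DiracV (Q : P3 -> V3) (x : P3) : HC := Dirac (fun y => vec (Q y)) x.

Definition RC1_on (O : P3 -> Prop) (f : P3 -> R) : Prop :=
  (forall x k, O x -> exists l, has_partial f k x l) /\
  (forall k, Rcont_on O (pd f k)) /\ Rcont_on O f.
Definition VC1_on (O : P3 -> Prop) (Q : P3 -> V3) : Prop :=
  RC1_on O (fun y => re (v1 (Q y))) /\ RC1_on O (fun y => im (v1 (Q y))) /\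
  RC1_on O (fun y => re (v2 (Q y))) /\ RC1_on O (fun y => im (v2 (Q y))) /\
  RC1_on O (fun y => re (v3 (Q y))) /\ RC1_on O (fun y => im (v3 (Q y))).

Definition riccati_sol (O : P3 -> Prop) (q : P3 -> Cx) (Q : P3 -> V3) : Prop :=
  VC1_on O Q /\
  forall x, O x -> Hadd (DiracV Q x) (Hsc (Vnorm2 (Q x))) = Hsc (q x).

Definition term (Qa Qb : P3 -> V3) (x : P3) : HC :=
  Hrdiv (Hsub (DiracV (fun y => Vsub (Qa y) (Qb y)) x)
              (Hscal (Cr 2) (vec (Vcross (Qa x) (Qb x)))))
        (vec (Vsub (Qa x) (Qb x))).

(* Subtracting the Riccati equations of Qa and Qb gives D(Qa - Qb) = |Qb|^2 - |Qa|^2, and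
   the quaternion identity |Qb|^2 - |Qa|^2 - 2 Qa x Qb = (Qa + Qb)(Qa - Qb) then shows that
   each quotient in the statement is just Qa + Qb.  The alternating sum of
   Q1 + Q2, Q3 + Q4, Q1 + Q4 and Q3 + Q2 vanishes. *)
From Stdlib Require Import Reals Lra ClassicalEpsilon.
Open Scope R_scope.

Ltac destruct_components := repeat match goal with
  | c : Cx |- _ => destruct c
  | h : HC |- _ => destruct h
  | v : V3 |- _ => destruct v end.

Ltac hc_ring := destruct_components;
  cbv [Hmul Hadd Hsub Hopp Hscal Hconj Hsc Hnorm2 Hinv vec Vsub Vcross Vnorm2
       Cadd Csub Copp Cmul Cr C0 H0 h0 h1 h2 h3 re im v1 v2 v3] in *;
  repeat match goal with
  | |- mkH _ _ _ _ = mkH _ _ _ _ => f_equal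
  | |- mkC _ _ = mkC _ _ => f_equal
  | |- mkV _ _ _ = mkV _ _ _ => f_equal end; ring.

Lemma Hmul_Hscal_assoc (x y z : HC) (c : Cx) :
  Hmul (Hmul x y) (Hscal c z) = Hscal c (Hmul x (Hmul y z)).
Proof. hc_ring. Qed.

Lemma Hmul_Hconj (x : HC) : Hmul x (Hconj x) = Hsc (Hnorm2 x).
Proof. hc_ring. Qed.

Lemma Hmul_Hsc (x : HC) (c : Cx) : Hmul x (Hsc c) = Hscal c x.
Proof. hc_ring. Qed.

Lemma Hscal_Hscal (x : HC) (c d : Cx) : Hscal c (Hscal d x) = Hscal (Cmul c d) x.
Proof. hc_ring. Qed.

Lemma Hscal_1 (x : HC) : Hscal (Cr 1) x = x.
Proof. hc_ring. Qed.

Lemma Cmul_Cinv (c : Cx) : c <> C0 -> Cmul (Cinv c) c = Cr 1.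
Proof.
  destruct c as [a b]; intro c_neq0.
  assert (a * a + b * b <> 0).
  { intro E. apply c_neq0.
    assert (a = 0) by nra. assert (b = 0) by nra. subst; reflexivity. }
  unfold Cmul, Cinv, Cr; cbn. f_equal; field; auto.
Qed.

Lemma Hrdiv_mulK (x y : HC) : Hinvertible y -> Hrdiv (Hmul x y) y = x.
Proof.
  intro y_inv. unfold Hrdiv, Hinv.
  rewrite Hmul_Hscal_assoc, Hmul_Hconj, Hmul_Hsc, Hscal_Hscal, Cmul_Cinv by exact y_inv.
  apply Hscal_1.
Qed.

Lemma pd_eq (f : P3 -> R) k x l : has_partial f k x l -> pd f k x = l.
Proof.
  intro Hl. unfold pd.
  pose proof (epsilon_spec (inhabits 0) (fun l => has_partial f k x l) (ex_intro _ l Hl)).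
  eapply uniqueness_limite; eauto.
Qed.

Lemma pd_sub (f g : P3 -> R) k x :
  (exists l, has_partial f k x l) -> (exists l, has_partial g k x l) ->
  pd (fun y => f y + - g y) k x = pd f k x + - pd g k x.
Proof.
  intros [lf Hf] [lg Hg]. rewrite (pd_eq _ _ _ _ Hf), (pd_eq _ _ _ _ Hg).
  apply pd_eq. unfold has_partial in *.
  apply (derivable_pt_lim_plus _ (fun t => - g (shift x k t))); auto.
  apply (derivable_pt_lim_opp (fun t => g (shift x k t))); auto.
Qed.

Lemma pd_const0 k x : pd (fun _ => 0) k x = 0.
Proof. apply pd_eq. apply derivable_pt_lim_const. Qed.

Definition has_Vpartials (Q : P3 -> V3) (x : P3) : Prop :=
  forall k, (exists l, has_partial (fun y => re (v1 (Q y))) k x l) /\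
            (exists l, has_partial (fun y => im (v1 (Q y))) k x l) /\
            (exists l, has_partial (fun y => re (v2 (Q y))) k x l) /\
            (exists l, has_partial (fun y => im (v2 (Q y))) k x l) /\
            (exists l, has_partial (fun y => re (v3 (Q y))) k x l) /\
            (exists l, has_partial (fun y => im (v3 (Q y))) k x l).

Lemma VC1_on_has_Vpartials O Q x : VC1_on O Q -> O x -> has_Vpartials Q x.
Proof.
  intros ([P1 _] & [P2 _] & [P3 _] & [P4 _] & [P5 _] & [P6 _]) Ox k.
  repeat split; auto.
Qed.

Lemma Hpd_vec_sub (Qa Qb : P3 -> V3) k x :
  has_Vpartials Qa x -> has_Vpartials Qb x ->
  Hpd (fun y => vec (Vsub (Qa y) (Qb y))) k x
  = Hsub (Hpd (fun y => vec (Qa y)) k x) (Hpd (fun y => vec (Qb y)) k x).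
Proof.
  intros Pa Pb. destruct (Pa k) as (a1 & a2 & a3 & a4 & a5 & a6).
  destruct (Pb k) as (b1 & b2 & b3 & b4 & b5 & b6).
  unfold Hpd, Cpd, Hsub, Hadd, Hopp, Cadd, Copp, vec, Vsub, Csub, C0; cbn.
  rewrite !pd_sub by auto. rewrite !pd_const0. f_equal; f_equal; ring.
Qed.

Lemma DiracV_sub (Qa Qb : P3 -> V3) x :
  has_Vpartials Qa x -> has_Vpartials Qb x ->
  DiracV (fun y => Vsub (Qa y) (Qb y)) x = Hsub (DiracV Qa x) (DiracV Qb x).
Proof.
  intros Pa Pb. unfold DiracV, Dirac. rewrite !Hpd_vec_sub by assumption. hc_ring.
Qed.

Lemma riccati_DiracV O q Q x :
  riccati_sol O q Q -> O x -> DiracV Q x = Hsub (Hsc (q x)) (Hsc (Vnorm2 (Q x))).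
Proof.
  intros [_ Ric] Ox. rewrite <- (Ric x Ox). generalize (DiracV Q x). intro d. hc_ring.
Qed.

Lemma riccati_difference_factor (a b : V3) (c : Cx) :
  Hsub (Hsub (Hsub (Hsc c) (Hsc (Vnorm2 a))) (Hsub (Hsc c) (Hsc (Vnorm2 b))))
       (Hscal (Cr 2) (vec (Vcross a b)))
  = Hmul (Hadd (vec a) (vec b)) (vec (Vsub a b)).
Proof. hc_ring. Qed.

Lemma term_riccati O q Qa Qb x :
  riccati_sol O q Qa -> riccati_sol O q Qb -> O x ->
  Hinvertible (vec (Vsub (Qa x) (Qb x))) ->
  term Qa Qb x = Hadd (vec (Qa x)) (vec (Qb x)).
Proof.
  intros Sa Sb Ox ab_inv. unfold term.
  rewrite DiracV_sub
    by (eapply VC1_on_has_Vpartials; [apply Sa || apply Sb | exact Ox]).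
  rewrite (riccati_DiracV O q Qa x Sa Ox), (riccati_DiracV O q Qb x Sb Ox).
  rewrite riccati_difference_factor. apply Hrdiv_mulK, ab_inv.
Qed.

Lemma Hsum_cross_cancel (a b c d : HC) :
  Hsub (Hsub (Hadd (Hadd a b) (Hadd c d)) (Hadd a d)) (Hadd c b) = H0.
Proof. hc_ring. Qed.

Theorem theorem4 (O : P3 -> Prop) (q : P3 -> Cx) (Q1 Q2 Q3 Q4 : P3 -> V3) :
  is_domain O ->
  Ccont_on O q ->
  riccati_sol O q Q1 -> riccati_sol O q Q2 ->
  riccati_sol O q Q3 -> riccati_sol O q Q4 ->
  (forall x, O x -> Hinvertible (vec (Vsub (Q1 x) (Q2 x)))) ->
  (forall x, O x -> Hinvertible (vec (Vsub (Q3 x) (Q4 x)))) ->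
  (forall x, O x -> Hinvertible (vec (Vsub (Q1 x) (Q4 x)))) ->
  (forall x, O x -> Hinvertible (vec (Vsub (Q3 x) (Q2 x)))) ->
  forall x, O x ->
    Hsub (Hsub (Hadd (term Q1 Q2 x) (term Q3 Q4 x)) (term Q1 Q4 x)) (term Q3 Q2 x)
    = H0.
Proof.
  intros _ _ S1 S2 S3 S4 I12 I34 I14 I32 x Ox.
  rewrite (term_riccati O q Q1 Q2), (term_riccati O q Q3 Q4),
    (term_riccati O q Q1 Q4), (term_riccati O q Q3 Q2) by auto.
  apply Hsum_cross_cancel.
Qed.
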